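(* Consider the reliable facility location problem described in the context, and define the decision-dependent set $\mathcal U^k(x)=\{u\in\mathbb R^{|I|}_+: \sum_{j\in J}u_j\le k,\ u_j\le x_{d,j}\ \forall j\in J,\ u_i=0\ \forall i\notin J\}$. If $C\ge\max_{i,j}c_{ij}$ and $\theta_i\le 0$ for all $i\in I$, then the problem $\min_{(x_c,x_d)\in\mathcal X}(1-\rho)\sum_{i\in I}\sum_{j\in J}c_{ij}x_{c,ij}+\rho\max_{u\in\mathcal U^0}\min_{(y_1,y_2)\in\mathcal Y(x,u)}\Big(\sum_{i\in I}\sum_{j\in J}c_{ij}y_{1,ij}+\sum_{i\in I}Cy_{2,i}\Big)$ is equivalent to the same problem with $\mathcal U^0$ replaced by $\mathcal U^k(x)$; in particular the two optimal values coincide.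
   Context: $I$ is a finite set of client sites and $J\subseteq I$ the set of potential facility sites; $d_i\ge 0$ is the demand at $i$; $c_{ij}\ge 0$ is the unit cost of serving $i$ from $j$, with $c_{ii}=0$; $A_j$ is the capacity of site $j$; $p$ and $k$ are positive integers; $\rho\in[0,1]$; $C$ is the unit penalty for unmet demand; $\theta_i$ is a demand-change parameter. First stage: $\mathcal X=\{(x_c,x_d)\in\mathbb R^{|I|\times|J|}_+\times\{0,1\}^{|J|}: \sum_{j\in J}x_{d,j}=p,\ \sum_{j\in J}x_{c,ij}\ge d_i\ \forall i\in I,\ \sum_{i\in I}x_{c,ij}\le A_jx_{d,j}\ \forall j\in J\}$. Uncertainty (disruptions): $\mathcal U^0=\{u\in\{0,1\}^{|I|}: \sum_{i\in I}u_i\le k\}$. Recourse: $\mathcal Y(x,u)=\{(y_1,y_2)\in\mathbb R^{|I||J|}_+\times\mathbb R^{|I|}_+: \sum_{j\in J}y_{1,ij}+y_{2,i}\ge(1+\theta_iu_i)d_i\ \forall i\in I,\ \sum_{i\in I}y_{1,ij}\le A_jx_{d,j}\ \forall j\in J,\ \sum_{i\in I}y_{1,ij}\le A_j(1-u_j)\ \forall j\in J\}$. Two formulations are called equivalent if they have the same optimal value and any optimal first-stage solution of one is optimal for the other, and vice versa. *)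

From HB Require Import structures.
From mathcomp Require Import all_boot all_order all_algebra.
From mathcomp Require Import all_classical all_reals ereal.
Set Implicit Arguments. Unset Strict Implicit. Unset Printing Implicit Defensive.
Import Order.TTheory GRing.Theory Num.Theory.
Local Open Scope classical_set_scope.
Local Open Scope ring_scope.

(* Potential facility sites: finite type J,
   embedded in I by an injective map emb (J is a subset of I).
   First-stage decision x = (x_c, x_d) with x_c : I -> J -> R, x_d : J -> R. *)

Section RFL.
Variables (R : realType) (I J : finType) (emb : J -> I).

Definition Xset (A : J -> R) (d : I -> R) (p : nat)
  : set ((I -> J -> R) * (J -> R)) :=
  [set x | (forall i j, 0 <= x.1 i j)
        /\ (forall j, x.2 j = 0 \/ x.2 j = 1)
        /\ \sum_(j : J) x.2 j = p%:R
        /\ (forall i, d i <= \sum_(j : J) x.1 i j)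
        /\ (forall j, \sum_(i : I) x.1 i j <= A j * x.2 j)].

Definition U0set (k : nat) : set (I -> R) :=
  [set u | (forall i, u i = 0 \/ u i = 1) /\ \sum_(i : I) u i <= k%:R].

Definition Ukset (k : nat) (xd : J -> R) : set (I -> R) :=
  [set u | (forall i, 0 <= u i)
        /\ \sum_(j : J) u (emb j) <= k%:R
        /\ (forall j, u (emb j) <= xd j)
        /\ (forall i, (forall j, emb j <> i) -> u i = 0)].

Definition Yset (A : J -> R) (d theta : I -> R) (xd : J -> R) (u : I -> R)
  : set ((I -> J -> R) * (I -> R)) :=
  [set y | (forall i j, 0 <= y.1 i j) /\ (forall i, 0 <= y.2 i)
        /\ (forall i, (1 + theta i * u i) * d i
                      <= \sum_(j : J) y.1 i j + y.2 i)
        /\ (forall j, \sum_(i : I) y.1 i j <= A j * xd j)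
        /\ (forall j, \sum_(i : I) y.1 i j <= A j * (1 - u (emb j)))].

Definition recourse_cost (c : I -> J -> R) (C : R)
  (y : (I -> J -> R) * (I -> R)) : R :=
  \sum_(i : I) \sum_(j : J) c i j * y.1 i j + \sum_(i : I) C * y.2 i.

Definition worst_case (U : (I -> J -> R) * (J -> R) -> set (I -> R))
  (A : J -> R) (d theta : I -> R) (c : I -> J -> R) (C : R)
  (x : (I -> J -> R) * (J -> R)) : \bar R :=
  ereal_sup [set ereal_inf [set (recourse_cost c C y)%:E
                             | y in Yset A d theta x.2 u]
            | u in U x].

Definition objective (U : (I -> J -> R) * (J -> R) -> set (I -> R))
  (A : J -> R) (d theta : I -> R) (c : I -> J -> R) (C rho : R)
  (x : (I -> J -> R) * (J -> R)) : \bar R :=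
  ((1 - rho) * \sum_(i : I) \sum_(j : J) c i j * x.1 i j)%:E
  + (rho%:E * worst_case U A d theta c C x)%E.

End RFL.

Definition opt_value (R : realType) (T : Type) (F : T -> \bar R) (X : set T)
  : \bar R := ereal_inf (F @` X).

Definition is_optimal (R : realType) (T : Type) (F : T -> \bar R) (X : set T)
  (x : T) : Prop := X x /\ F x = opt_value F X.

Definition equivalent (R : realType) (T : Type) (F G : T -> \bar R)
  (X : set T) : Prop :=
  opt_value F X = opt_value G X /\
  (forall x, is_optimal F X x <-> is_optimal G X x).

From mathcomp Require Import all_boot all_order all_algebra.
From mathcomp Require Import all_classical all_reals ereal.
From mathcomp Require Import ring lra.
Set Implicit Arguments. Unset Strict Implicit. Unset Printing Implicit Defensive.
Import Order.TTheory GRing.Theory Num.Theory.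
Local Open Scope classical_set_scope.
Local Open Scope ring_scope.

(* Fix a first stage x with binary x_d.  The constraints of Y(x,u) are jointly
   linear in (u, y), so the recourse value u |-> min_{y in Y(x,u)} cost y is
   convex and its strict sublevel sets are convex.  On the sites of J, U^k(x) is
   the polytope {0 <= f <= x_d, sum f <= k}, each point of which is a convex
   combination of 0/1 points: move along e_a - e_b when two coordinates a, b are
   fractional, along e_a when only a is, until one more coordinate is integral.
   These 0/1 points lie in U^0, so the worst case over U^k(x) is at most the one
   over U^0.  Conversely, switching off the disruptions of u in U^0 at closed
   sites lands in U^k(x) and only shrinks Y(x,u): with theta <= 0 the demand can
   only grow, and a closed site has no capacity anyway.  Hence the two objectives
   agree on the whole of X. *)

Section ConvexPred.
Variables (R : realType) (T : Type).

Definition convex_comb (l : R) (u v : T -> R) : T -> R :=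
  fun t => l * u t + (1 - l) * v t.

Definition convex_pred (S : (T -> R) -> Prop) : Prop :=
  forall l u v, 0 <= l <= 1 -> S u -> S v -> S (convex_comb l u v).

Definition line (u delta : T -> R) (r : R) : T -> R := fun t => u t + r * delta t.

Lemma convex_pred_line S u delta s r :
  convex_pred S -> s < 0 < r -> S (line u delta s) -> S (line u delta r) -> S u.
Proof.
move=> hS /andP[s_lt0 r_gt0] Ss Sr.
have rs_neq0 : r - s != 0 by rewrite gt_eqF // subr_gt0 (lt_trans s_lt0).
have l01 : 0 <= r / (r - s) <= 1.
  by rewrite divr_ge0 ?ler_pdivrMr ?subr_gt0 ?(lt_trans s_lt0) /=; lra.
have -> : u = convex_comb (r / (r - s)) (line u delta s) (line u delta r).
  by apply: funext => t; rewrite /convex_comb /line; field.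
exact: hS.
Qed.

End ConvexPred.

Definition binary (R : realType) (T : Type) (f : T -> R) : Prop :=
  forall t, f t = 0 \/ f t = 1.

Lemma sum_binary_nat (R : realType) (T : finType) (P : pred T) (f : T -> R) :
  (forall t, P t -> f t = 0 \/ f t = 1) -> exists n : nat, \sum_(t | P t) f t = n%:R.
Proof.
move=> f01; apply: (big_ind (fun x => exists n : nat, x = n%:R)).
- by exists 0%N.
- by move=> _ _ [m ->] [n ->]; exists (m + n)%N; rewrite natrD.
- by move=> t /f01 [->|->]; [exists 0%N | exists 1%N].
Qed.

Lemma sum_indicator1 (R : realType) (T : finType) (a : T) :
  \sum_t (t == a)%:R = 1 :> R.
Proof. by rewrite (bigD1 a) //= eqxx big1 ?addr0 // => t /negbTE ->. Qed.

Lemma sum_convex_comb (R : realType) (T : finType) l (f g : T -> R) :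
  \sum_t (l * f t + (1 - l) * g t) = l * \sum_t f t + (1 - l) * \sum_t g t.
Proof. by rewrite big_split /= -!mulr_sumr. Qed.

Lemma ler_convex_comb (R : realType) (l p p' q q' : R) : 0 <= l <= 1 ->
  p <= q -> p' <= q' -> l * p + (1 - l) * p' <= l * q + (1 - l) * q'.
Proof.
case/andP=> l_ge0 l_le1 pq pq'.
by rewrite lerD // ler_wpM2l // subr_ge0.
Qed.

Lemma ltr_convex_comb (R : realType) (l p q m : R) : 0 <= l <= 1 ->
  p < m -> q < m -> l * p + (1 - l) * q < m.
Proof.
case/andP=> l_ge0 l_le1 pm qm; case: (lerP p q) => [pq|qp].
  have : l * p <= l * q by exact: ler_wpM2l.
  lra.
have : (1 - l) * q <= (1 - l) * p by apply: ler_wpM2l; [rewrite subr_ge0 | exact: ltW].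
lra.
Qed.

Lemma sum_line (R : realType) (T : finType) (f delta : T -> R) r :
  \sum_t line f delta r t = \sum_t f t + r * \sum_t delta t.
Proof. by rewrite big_split /= mulr_sumr. Qed.

Section BudgetBox.
Variables (R : realType) (T : finType) (b : T -> R) (k : nat).
Hypothesis b01 : binary b.

Definition budget_box (f : T -> R) : Prop :=
  (forall t, 0 <= f t <= b t) /\ \sum_t f t <= k%:R.

Definition frac_support (f : T -> R) : {set T} := [set t | 0 < f t < 1].

Lemma budget_box_le1 f t : budget_box f -> f t <= 1.
Proof. by case=> /(_ t) /andP[_ le_fb] _; case: (b01 t) le_fb => -> ?; lra. Qed.

Lemma frac_support_bound1 f t : budget_box f -> t \in frac_support f -> b t = 1.
Proof.
case=> /(_ t) /andP[_ le_fb] _; rewrite inE => /andP[f_gt0 _].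
by case: (b01 t) => // b0; move: le_fb; rewrite b0; lra.
Qed.

Lemma notin_frac_support_binary f t :
  budget_box f -> t \notin frac_support f -> f t = 0 \/ f t = 1.
Proof.
move=> hf; have /andP[f_ge0 _] := hf.1 t; have f_le1 := budget_box_le1 t hf.
by rewrite inE negb_and -!leNgt => /orP[] ?; [left|right]; lra.
Qed.

Lemma card_frac_support_lt f g c :
  (forall t, t \notin frac_support f -> g t = f t) ->
  c \in frac_support f -> c \notin frac_support g ->
  (#|frac_support g| < #|frac_support f|)%N.
Proof.
move=> g_eq cf cg; apply/proper_card/properP; split; last by exists c.
apply/fintype.subsetP => t; apply: contraTT => tf.
by have := g_eq t tf; move: tf; rewrite !inE => + ->.
Qed.

Definition pair_dir (a c : T) : T -> R := fun t => (t == a)%:R - (t == c)%:R.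

Lemma line_pair_dirE f a c r t : a != c ->
  line f (pair_dir a c) r t =
  if t == a then f a + r else if t == c then f c - r else f t.
Proof.
move=> ac; rewrite /line /pair_dir.
case: eqVneq => [->|_]; first by rewrite (negbTE ac) /= subr0 mulr1.
by case: eqP => [->|_] /=; rewrite ?sub0r ?mulrN1 ?oppr0 ?mulr0 ?addr0.
Qed.

Lemma pair_shift_reduces f a c :
  budget_box f -> a \in frac_support f -> c \in frac_support f -> a != c ->
  exists2 r, 0 < r & budget_box (line f (pair_dir a c) r) /\
    (#|frac_support (line f (pair_dir a c) r)| < #|frac_support f|)%N.
Proof.
move=> hf af cf ac; have ba := frac_support_bound1 hf af.
have cb := frac_support_bound1 hf cf.
move: (af) (cf); rewrite !inE => /andP[fa_gt0 fa_lt1] /andP[fc_gt0 fc_lt1].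
have fixed r t : t \notin frac_support f -> line f (pair_dir a c) r t = f t.
  by rewrite line_pair_dirE //; case: eqVneq af => [->->|_ _] //; case: eqVneq cf => [->->|].
have box r : 0 <= r -> r <= 1 - f a -> r <= f c ->
    budget_box (line f (pair_dir a c) r).
  move=> r_ge0 ra rc; split; last first.
    by rewrite sum_line sumrB !sum_indicator1 subrr mulr0 addr0; exact: hf.2.
  move=> t; rewrite line_pair_dirE //.
  case: eqVneq => [->|_]; first by rewrite ba; apply/andP; split; lra.
  case: eqVneq => [->|_]; first by rewrite cb; apply/andP; split; lra.
  exact: hf.1.
case: (leP (1 - f a) (f c)) => fac; [exists (1 - f a) | exists (f c)]; try lra.
- split; first by apply: box; lra.
  apply: (card_frac_support_lt (fixed _) af).
  by rewrite inE line_pair_dirE // eqxx; apply/negP => /andP[_]; lra.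
- split; first by apply: box; lra.
  apply: (card_frac_support_lt (fixed _) cf).
  by rewrite inE line_pair_dirE // eq_sym (negbTE ac) eqxx; apply/negP => /andP[]; lra.
Qed.

Section Induction.
Variables (S : (T -> R) -> Prop) (f : T -> R).
Hypotheses (S_convex : convex_pred S) (f_box : budget_box f).
Hypothesis S_smaller : forall g, budget_box g ->
  (#|frac_support g| < #|frac_support f|)%N -> S g.

Lemma budget_box_pair_step a c :
  a \in frac_support f -> c \in frac_support f -> a != c -> S f.
Proof.
move=> af cf ac.
have [r r_gt0 [box_r lt_r]] := pair_shift_reduces f_box af cf ac.
have ca : c != a by rewrite eq_sym.
have [s s_gt0 [box_s lt_s]] := pair_shift_reduces f_box cf af ca.
have flip : line f (pair_dir c a) s = line f (pair_dir a c) (- s).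
  by apply: funext => t; rewrite /line /pair_dir; ring.
apply: (convex_pred_line (delta := pair_dir a c) (s := - s) (r := r) S_convex).
- by rewrite oppr_lt0 s_gt0 r_gt0.
- by rewrite -flip; exact: S_smaller.
- exact: S_smaller.
Qed.

Lemma budget_box_single_step a :
  a \in frac_support f -> (forall c, c \in frac_support f -> c = a) -> S f.
Proof.
move=> af only_a; have ba := frac_support_bound1 f_box af.
move: (af); rewrite inE => /andP[fa_gt0 fa_lt1].
pose delta t : R := (t == a)%:R.
have lineE r t : line f delta r t = if t == a then f a + r else f t.
  by rewrite /line /delta; case: eqP => [->|_] /=; rewrite ?mulr1 ?mulr0 ?addr0.
have others_binary t : t != a -> f t = 0 \/ f t = 1.
  move=> ta; apply: notin_frac_support_binary => //.
  by apply: contra ta => /only_a ->.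
have [n sum_others] := sum_binary_nat others_binary.
have sum_f : \sum_t f t = f a + n%:R by rewrite (bigD1 a) //= sum_others.
have n_lt_k : (n < k)%N by rewrite -(ltr_nat R); have := f_box.2; lra.
have fixed r t : t \notin frac_support f -> line f delta r t = f t.
  by rewrite lineE; case: eqVneq af => [->->|].
have box r : - f a <= r <= 1 - f a -> \sum_t f t + r <= k%:R ->
    budget_box (line f delta r).
  move=> /andP[r_lo r_hi] sum_le; split; last by rewrite sum_line sum_indicator1 mulr1.
  move=> t; rewrite lineE; case: eqVneq => [->|_]; last exact: f_box.1.
  by rewrite ba; apply/andP; split; lra.
apply: (convex_pred_line (delta := delta) (s := - f a) (r := 1 - f a) S_convex).
- by apply/andP; split; lra.
- apply: S_smaller; first by apply: box; [apply/andP; split|have := f_box.2]; lra.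
  apply: (card_frac_support_lt (fixed _) af).
  by rewrite inE lineE eqxx addrN ltxx.
- apply: S_smaller.
    apply: box; first by apply/andP; split; lra.
    have : n.+1%:R <= k%:R :> R by rewrite ler_nat.
    by rewrite -natr1 sum_f; lra.
  apply: (card_frac_support_lt (fixed _) af).
  by rewrite inE lineE eqxx subrKC ltxx andbF.
Qed.

End Induction.

Lemma budget_box_convex_hull S : convex_pred S ->
  (forall g, budget_box g -> binary g -> S g) -> forall f, budget_box f -> S f.
Proof.
move=> S_convex S_binary f; have [n] := ubnP #|frac_support f|.
elim: n f => // n IH f /ltnSE f_card f_box.
have S_smaller g : budget_box g ->
    (#|frac_support g| < #|frac_support f|)%N -> S g.
  by move=> g_box g_card; apply: IH => //; exact: leq_trans f_card.
case: (pickP (mem (frac_support f))) => [a af | no_frac]; last first.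
  by apply: S_binary => // t; apply: notin_frac_support_binary => //; apply/negbT/no_frac.
case: (pickP [pred c | (c \in frac_support f) && (c != a)]) => [c /andP[cf ca] | only_a].
  exact: (budget_box_pair_step S_convex f_box S_smaller cf af ca).
apply: (budget_box_single_step S_convex f_box S_smaller af) => c cf.
by apply/eqP; have := only_a c; rewrite /= cf => /negbFE.
Qed.

End BudgetBox.

Section ZeroExtension.
Variables (R : realType) (I J : finType) (emb : J -> I).

Definition zero_ext (f : J -> R) : I -> R :=
  fun i => if [pick j | emb j == i] is Some j then f j else 0.

Variant zero_ext_spec (f : J -> R) (i : I) : R -> Prop :=
  | ZeroExtEmb j of emb j = i : zero_ext_spec f i (f j)
  | ZeroExtOut of (forall j, emb j <> i) : zero_ext_spec f i 0.

Lemma zero_extP f i : zero_ext_spec f i (zero_ext f i).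
Proof.
rewrite /zero_ext; case: pickP => [j /eqP|no_j]; first exact: ZeroExtEmb.
by apply: ZeroExtOut => j /eqP; rewrite no_j.
Qed.

Lemma zero_ext_comb l f g :
  zero_ext (convex_comb l f g) = convex_comb l (zero_ext f) (zero_ext g).
Proof.
apply: funext => i; rewrite /zero_ext /convex_comb.
by case: pickP => [j _|_]; rewrite ?mulr0 ?addr0.
Qed.

Lemma zero_ext_restrict (u : I -> R) :
  (forall i, (forall j, emb j <> i) -> u i = 0) -> zero_ext (u \o emb) = u.
Proof. by move=> u_out; apply: funext => i; case: zero_extP => [j <-|/u_out ->]. Qed.

Hypothesis emb_inj : injective emb.

Lemma zero_ext_emb f j : zero_ext f (emb j) = f j.
Proof. by case: zero_extP => [j' /emb_inj ->|/(_ j)]. Qed.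

Lemma sum_zero_ext f : \sum_i zero_ext f i = \sum_j f j.
Proof.
rewrite (bigID (mem (emb @: [set: J]%SET))) /= [X in _ + X]big1 ?addr0.
  rewrite big_imset /=; last by move=> ? ? _ _ /emb_inj.
  by apply: eq_big => [j|j _]; rewrite ?inE ?zero_ext_emb.
move=> i /negP i_out; case: zero_extP => // j ji.
by case: i_out; rewrite -ji imset_f ?inE.
Qed.

Lemma sum_emb_le (u : I -> R) :
  (forall i, 0 <= u i) -> \sum_j u (emb j) <= \sum_i u i.
Proof.
move=> u_ge0; rewrite -(sum_zero_ext (u \o emb)); apply: ler_sum => i _.
by case: zero_extP => [j <-|].
Qed.

Lemma Ukset_zero_ext k xd f :
  (forall j, 0 <= f j <= xd j) -> \sum_j f j <= k%:R ->
  Ukset emb k xd (zero_ext f).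
Proof.
move=> f_box f_sum; split; first by move=> i; case: zero_extP => [j _|//]; case/andP: (f_box j).
split; first by under eq_bigr => j _ do rewrite zero_ext_emb.
split; first by move=> j; rewrite zero_ext_emb; case/andP: (f_box j).
by move=> i i_out; case: zero_extP => // j /i_out.
Qed.

Lemma U0set_zero_ext k f :
  binary f -> \sum_j f j <= k%:R -> U0set k (zero_ext f).
Proof.
move=> f01 f_sum; split; last by rewrite sum_zero_ext.
by move=> i; case: zero_extP => [j _|]; [exact: f01 | left].
Qed.

End ZeroExtension.

Lemma lee_of_lt_fin (R : realType) (x y : \bar R) :
  (forall r : R, (y < r%:E)%E -> (x < r%:E)%E) -> (x <= y)%E.
Proof.
move=> h; rewrite leNgt; apply/negP => yx.
case: x y yx h => [s| |] [t| |] // yx h.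
- by have := h ((t + s) / 2); rewrite !lte_fin in yx *; lra.
- by have := h (s - 1) (ltNyr _); rewrite lte_fin; lra.
- by have := h (t + 1); rewrite lte_fin ltrDl ltr01 ltNge leey => /(_ isT).
- by have := h 0 (ltNyr _); rewrite ltNge leey.
Qed.

Section Recourse.
Variables (R : realType) (I J : finType) (emb : J -> I).
Variables (A : J -> R) (d theta : I -> R) (c : I -> J -> R) (C : R).

Definition recourse_value (xd : J -> R) (u : I -> R) : \bar R :=
  ereal_inf [set (recourse_cost c C y)%:E | y in Yset emb A d theta xd u].

Definition recourse_comb l (y z : (I -> J -> R) * (I -> R)) :=
  (fun i => convex_comb l (y.1 i) (z.1 i), convex_comb l y.2 z.2).

Lemma Yset_comb xd l u v y z : 0 <= l <= 1 ->
  Yset emb A d theta xd u y -> Yset emb A d theta xd v z ->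
  Yset emb A d theta xd (convex_comb l u v) (recourse_comb l y z).
Proof.
move=> l01 [y1 [y2 [y3 [y4 y5]]]] [z1 [z2 [z3 [z4 z5]]]].
have [l_ge0 l_le1] := andP l01; have l'_ge0 : 0 <= 1 - l by rewrite subr_ge0.
split; [|split; [|split; [|split]]] => [i j|i|i|j|j] /=; rewrite /convex_comb.
- by rewrite addr_ge0 ?mulr_ge0.
- by rewrite addr_ge0 ?mulr_ge0.
- by have := ler_convex_comb l01 (y3 i) (z3 i); rewrite sum_convex_comb; lra.
- by have := ler_convex_comb l01 (y4 j) (z4 j); rewrite sum_convex_comb; lra.
- by have := ler_convex_comb l01 (y5 j) (z5 j); rewrite sum_convex_comb; lra.
Qed.

Lemma recourse_cost_comb l y z : recourse_cost c C (recourse_comb l y z) =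
  l * recourse_cost c C y + (1 - l) * recourse_cost c C z.
Proof.
rewrite /recourse_cost /=.
have -> : \sum_i \sum_j c i j * convex_comb l (y.1 i) (z.1 i) j =
    l * \sum_i \sum_j c i j * y.1 i j + (1 - l) * \sum_i \sum_j c i j * z.1 i j.
  rewrite -sum_convex_comb; apply: eq_bigr => i _; rewrite -sum_convex_comb.
  by apply: eq_bigr => j _; rewrite /convex_comb; ring.
have -> : \sum_i C * convex_comb l y.2 z.2 i =
    l * \sum_i C * y.2 i + (1 - l) * \sum_i C * z.2 i.
  by rewrite -sum_convex_comb; apply: eq_bigr => i _; rewrite /convex_comb; ring.
ring.
Qed.

Lemma recourse_value_sublevel_convex xd (m : R) :
  convex_pred (fun u => (recourse_value xd u < m%:E)%E).
Proof.
move=> l u v l01 /ereal_inf_ltP[_ [y Yy <-] ym] /ereal_inf_ltP[_ [z Yz <-] zm].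
apply/ereal_inf_ltP; exists (recourse_cost c C (recourse_comb l y z))%:E.
  by exists (recourse_comb l y z) => //; exact: Yset_comb.
by rewrite lte_fin recourse_cost_comb ltr_convex_comb // -lte_fin.
Qed.

Hypotheses (d_ge0 : forall i, 0 <= d i) (A_ge0 : forall j, 0 <= A j).
Hypothesis theta_le0 : forall i, theta i <= 0.

Lemma Yset_antitone xd u' u : (forall i, u' i <= u i) ->
  (forall j, u' (emb j) = u (emb j) \/ xd j <= 1 - u (emb j)) ->
  Yset emb A d theta xd u' `<=` Yset emb A d theta xd u.
Proof.
move=> le_u same_or_closed y [y1 [y2 [y3 [y4 y5]]]].
split; [done | split; [done | split; [|split; [done|]]]].
- move=> i; apply: le_trans (y3 i); apply: ler_wpM2r (d_ge0 i) _ _ _.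
  by rewrite lerD2l; exact: ler_wnM2l (theta_le0 i) _ _ (le_u i).
- move=> j; case: (same_or_closed j) => [<-|xd_le]; first exact: y5.
  by apply: le_trans (y4 j) _; exact: ler_wpM2l (A_ge0 j) _ _ xd_le.
Qed.

Hypothesis emb_inj : injective emb.
Variable k : nat.

Lemma worst_case_U0_le_Uk x : binary x.2 ->
  (worst_case emb (fun _ => @U0set R I k) A d theta c C x <=
   worst_case emb (fun x => Ukset emb k x.2) A d theta c C x)%E.
Proof.
move=> x01; apply/ereal_supP => _ [u [u01 u_sum] <-].
have u_ge0 i : 0 <= u i by case: (u01 i) => ->.
have u_le1 i : u i <= 1 by case: (u01 i) => ->.
pose u' := zero_ext emb (fun j => u (emb j) * x.2 j).
apply: le_ereal_sup_tmp; exists (recourse_value x.2 u').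
  exists u' => //; apply: Ukset_zero_ext => // [j|].
    by case: (x01 j) => ->; rewrite ?mulr0 ?mulr1 ?lexx ?u_ge0 ?u_le1.
  apply: le_trans u_sum; apply: le_trans (sum_emb_le emb_inj u_ge0).
  by apply: ler_sum => j _; case: (x01 j) => ->; rewrite ?mulr0 ?mulr1.
apply/ereal_inf_le_tmp/image_subset/Yset_antitone => [i|j].
  by rewrite /u'; case: zero_extP => [j <-|_] //=; case: (x01 j) => ->; rewrite ?mulr0 ?mulr1.
rewrite /u' (zero_ext_emb emb_inj); case: (x01 j) => ->; last by left; rewrite mulr1.
by right; rewrite subr_ge0.
Qed.

Lemma worst_case_Uk_le_U0 x : binary x.2 ->
  (worst_case emb (fun x => Ukset emb k x.2) A d theta c C x <=
   worst_case emb (fun _ => @U0set R I k) A d theta c C x)%E.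
Proof.
move=> x01; apply/ereal_supP => _ [u [u_ge0 [u_sum [u_le u_out]]] <-].
apply: lee_of_lt_fin => m wc_lt_m.
rewrite -(zero_ext_restrict u_out).
pose S f := (recourse_value x.2 (zero_ext emb f) < m%:E)%E.
apply: (budget_box_convex_hull (k := k) x01 (S := S)).
- by move=> l f g l01 Sf Sg; rewrite /S zero_ext_comb; exact: recourse_value_sublevel_convex.
- move=> f [_ f_sum] f01; apply: le_lt_trans wc_lt_m; apply: ereal_sup_ubound.
  by exists (zero_ext emb f); first exact: U0set_zero_ext.
- by split => // j; rewrite /= u_ge0 u_le.
Qed.

End Recourse.

Lemma equivalent_eq_on (R : realType) (T : Type) (F G : T -> \bar R) (X : set T) :
  (forall x, X x -> F x = G x) -> equivalent F G X.
Proof.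
move=> FG; have img : F @` X = G @` X.
  by apply/seteqP; split=> _ [x Xx <-]; exists x; rewrite ?FG.
split=> [|x]; first by rewrite /opt_value img.
rewrite /is_optimal /opt_value img.
by split=> -[Xx <-]; split; rewrite ?FG.
Qed.

Theorem corollary13 (R : realType) (I J : finType) (emb : J -> I)
  (d : I -> R) (c : I -> J -> R) (A : J -> R) (p k : nat)
  (rho C : R) (theta : I -> R) :
  injective emb ->
  (forall i, 0 <= d i) ->
  (forall i j, 0 <= c i j) ->
  (forall j, c (emb j) j = 0) ->
  (forall j, 0 <= A j) ->
  (0 < p)%N -> (0 < k)%N ->
  0 <= rho -> rho <= 1 ->
  (forall i j, c i j <= C) ->
  (forall i, theta i <= 0) ->
  equivalent
    (objective emb (fun _ => @U0set R I k) A d theta c C rho)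
    (objective emb (fun x => Ukset emb k x.2) A d theta c C rho)
    (Xset A d p).
Proof.
move=> emb_inj d_ge0 _ _ A_ge0 _ _ _ _ _ theta_le0.
apply: equivalent_eq_on => x [_ [x01 _]]; rewrite /objective.
congr (_ + _ * _)%E; apply/eqP; rewrite eq_le.
by rewrite worst_case_U0_le_Uk ?worst_case_Uk_le_U0.
Qed.
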